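(* For every finitely generated squarefree $\mathbb{N}^n$-graded $S$-module $M$, its coarse Hilbert series satisfies \[ H(M,t)=\sum_{\sigma\subseteq[n]}\dim_{\mathbb{k}} M_\sigma\, H(N_{|\sigma|},t)=\sum_{\sigma\subseteq[n]}\dim_{\mathbb{k}} M_\sigma\,\frac{t^{|\sigma|}}{(1-t)^{|\sigma|}}, \] where $M_\sigma$ is the component of $M$ in degree equal to the $0/1$-indicator vector of $\sigma$. In particular, the cone of Hilbert series of squarefree $S$-modules is simplicial and its extremal rays are spanned by $H(N_\ell,t)=t^\ell/(1-t)^\ell$ for $0\le \ell\le n$.
   Context: $S=\mathbb{k}[x_1,\dots,x_n]$, fine $\mathbb{N}^n$-grading. An $\mathbb{N}^n$-graded $S$-module $M$ is squarefree if for every $a\in\mathbb{N}^n$ and $i$ with $a_i\neq0$, multiplication $x_i:M_a\to M_{a+e_i}$ is bijective. The coarse Hilbert series is $H(M,t)=\sum_{i\ge0}\dim_{\mathbb{k}}M_i t^i$ with $M_i=\bigoplus_{|a|=i}M_a$. For $0\le\ell\le n$, $N_\ell$ denotes the squarefree module with $N_a\cong\mathbb{k}$ when $\mathrm{supp}(a)=[\ell]=\{1,\dots,\ell\}$ and $N_a=0$ otherwise; its Hilbert series is $t^\ell/(1-t)^\ell$. The cone of Hilbert series of squarefree modules is the convex cone in $\mathbb{R}[[t]]$ spanned by the Hilbert series of all finitely generated squarefree $S$-modules. *)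

From HB Require Import structures.
From mathcomp Require Import all_boot all_order all_algebra.
From mathcomp Require Import mpoly.
From Stdlib Require Import ClassicalEpsilon.

Set Implicit Arguments.
Unset Strict Implicit.
Unset Printing Implicit Defensive.

Import Order.TTheory GRing.Theory Num.Theory.
Local Open Scope ring_scope.

(* S = k[x_1,...,x_n] is {mpoly K[n]}; the fine N^n-grading is indexed *)
(* by monomials 'X_{1..n} (exponent vectors a in N^n).                 *)

Record gmod (K : fieldType) (n : nat) := GMod {
  gm_car : lmodType {mpoly K[n]};
  gm_comp : 'X_{1..n} -> {pred gm_car}
}.
Arguments gm_car {K n} g.
Arguments gm_comp {K n} g a.

Section GradedModules.
Variables (K : fieldType) (n : nat).
Implicit Types (M : gmod K n).

Definition is_graded M : Prop :=
  [/\ (forall a, (0 : gm_car M) \in gm_comp M a),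
      (forall a (u v : gm_car M), u \in gm_comp M a -> v \in gm_comp M a ->
          u + v \in gm_comp M a),
      (forall a (c : K) (u : gm_car M), u \in gm_comp M a ->
          c%:MP *: u \in gm_comp M a),
      (forall a b (u : gm_car M), u \in gm_comp M a ->
          'X_[b] *: u \in gm_comp M (a + b)%MM) &
   [/\ (forall v : gm_car M, exists (s : seq 'X_{1..n}) (f : 'X_{1..n} -> gm_car M),
          [/\ uniq s, (forall a, f a \in gm_comp M a) & v = \sum_(a <- s) f a]) &
      (forall (s : seq 'X_{1..n}) (f : 'X_{1..n} -> gm_car M),
          uniq s -> (forall a, f a \in gm_comp M a) ->
          \sum_(a <- s) f a = 0 -> forall a, a \in s -> f a = 0)]].

Definition is_fg M : Prop :=
  exists gens : seq (gm_car M), forall v : gm_car M,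
    exists p : 'I_(size gens) -> {mpoly K[n]}, v = \sum_(j < size gens) p j *: gens`_j.

Definition is_squarefree M : Prop :=
  forall (a : 'X_{1..n}) (i : 'I_n), a i != 0%N ->
    (forall u v : gm_car M, u \in gm_comp M a -> v \in gm_comp M a ->
        'X_i *: u = 'X_i *: v -> u = v) /\
    (forall w : gm_car M, w \in gm_comp M (a + U_(i))%MM ->
        exists2 u, u \in gm_comp M a & 'X_i *: u = w).

Definition fg_squarefree M : Prop := [/\ is_graded M, is_fg M & is_squarefree M].

Definition is_Kbasis M (P : {pred gm_car M}) (s : seq (gm_car M)) : Prop :=
  [/\ all (mem P) s,
      (forall c : 'I_(size s) -> K,
          \sum_(j < size s) (c j)%:MP *: s`_j = 0 -> forall j, c j = 0) &
      (forall v, v \in P -> exists c : 'I_(size s) -> K,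
          v = \sum_(j < size s) (c j)%:MP *: s`_j)].

Definition has_dimK M (P : {pred gm_car M}) (d : nat) : Prop :=
  exists s, size s = d /\ is_Kbasis P s.

(* dim_k P; only meaningful when P is finite-dimensional (which holds for *)
(* the components of finitely generated graded modules).                 *)
Definition dimK M (P : {pred gm_car M}) : nat :=
  epsilon (inhabits 0%N) (has_dimK P).

Definition dimc M (a : 'X_{1..n}) : nat := dimK (gm_comp M a).

Definition hilb M (i : nat) : nat :=
  (\sum_(a : 'X_{1..n < i.+1} | mdeg a == i) dimc M a)%N.

Definition indic (sigma : {set 'I_n}) : 'X_{1..n} :=
  [multinom (i \in sigma : nat) | i < n].

Definition msupport (a : 'X_{1..n}) : {set 'I_n} := [set i | a i != 0%N].

End GradedModules.

(* Formal power series in R[[t]], as coefficient sequences.            *)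
Definition series (R : Type) := nat -> R.

Definition ps_one (R : ringType) : series R := fun i => (i == 0%N)%:R.
Definition ps_mul (R : ringType) (f g : series R) : series R :=
  fun i => \sum_(j < i.+1) f j * g (i - j)%N.
(* t/(1-t) = t + t^2 + t^3 + ... *)
Definition ps_t_over_1mt (R : ringType) : series R := fun i => (i != 0%N)%:R.
(* t^l/(1-t)^l = (t/(1-t))^l ; this is H(N_l, t) *)
Definition geomS (R : ringType) (l : nat) : series R :=
  iter l (ps_mul (ps_t_over_1mt R)) (ps_one R).

Definition hilbS (R : ringType) (K : fieldType) (n : nat) (M : gmod K n) : series R :=
  fun i => (hilb M i)%:R.

Definition in_sqf_cone (R : realFieldType) (K : fieldType) (n : nat) (f : series R) : Prop :=
  exists (k : nat) (c : 'I_k -> R) (Ms : 'I_k -> gmod K n),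
    [/\ forall j, 0 <= c j,
        forall j, fg_squarefree (Ms j) &
        forall i, f i = \sum_(j < k) c j * hilbS R (Ms j) i].

(* Multiplication by x_i identifies M_a with M_(a + e_i) whenever a_i > 0, so in a
   squarefree module dim M_a only depends on sigma = supp a.  Grouping the degrees
   of total degree i by their support, and counting the a with supp a = sigma and
   |a| = i, which is the coefficient of t^i in (t/(1-t))^|sigma|, gives H(M,t).
   Applied to N_l, where dim (N_l)_sigma = [sigma = [l]], this gives H(N_l,t) =
   t^l/(1-t)^l, so every H(M,t) is a nonnegative combination of these series; they
   start in degree l, hence are linearly independent. *)

From HB Require Import structures.
From mathcomp Require Import all_boot all_order all_algebra.
From mathcomp Require Import mpoly.
From mathcomp Require Import zify.
From Stdlib Require Import FunctionalExtensionality PropExtensionality ClassicalEpsilon.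

Set Implicit Arguments.
Unset Strict Implicit.
Unset Printing Implicit Defensive.
Import Order.TTheory GRing.Theory Num.Theory.
Local Open Scope ring_scope.

Section GeomSeries.
Variable R : nzRingType.

Lemma geomS_succ k i :
  geomS R k.+1 i = \sum_(j < i.+1) ((j : nat) != 0%N)%:R * geomS R k (i - j)%N.
Proof. by []. Qed.

Lemma geomS_small k i : (i < k)%N -> geomS R k i = 0.
Proof.
elim: k i => [//|k IH] i hi; rewrite geomS_succ big1 // => j _.
have [->|j0] := eqVneq (j : nat) 0%N; first by rewrite mul0r.
by rewrite IH ?mulr0 //; have := ltn_ord j; lia.
Qed.

Lemma geomS_diag k : geomS R k k = 1.
Proof.
elim: k => [//|k IH]; rewrite geomS_succ big_ord_recl mul0r add0r.
rewrite big_ord_recl /= mul1r subSS subn0 IH big1 ?addr0 // => j _.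
by rewrite mul1r geomS_small // /bump /=; have := ltn_ord j; lia.
Qed.

End GeomSeries.

Lemma geomS_lin_indep (R : nzRingType) n (c : 'I_n.+1 -> R) :
  (forall i, \sum_(l < n.+1) c l * geomS R l i = 0) -> forall l, c l = 0.
Proof.
move=> hc; suff h m (l : 'I_n.+1) : (l < m)%N -> c l = 0 by move=> l; apply: (h l.+1).
elim: m l => [//|m IH] l hl.
have := hc l; rewrite (bigD1 l) //= big1 ?addr0 ?geomS_diag ?mulr1 // => k hk.
have [kl|lk] := ltnP k l; first by rewrite IH ?mul0r //; lia.
rewrite geomS_small ?mulr0 // ltn_neqAle lk andbT.
by apply: contra hk => /eqP e; apply/eqP/val_inj.
Qed.

(* Degree vectors of total degree i are handled as functions 'I_n -> 'I_B.+1 with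
   i <= B, so that they range over a finite type. *)
Section BoundedFunctions.
Variables (n B : nat).
Local Notation FT := {ffun 'I_n -> 'I_B.+1}.
Implicit Types (f : FT) (x : 'I_n) (j : 'I_B.+1).

Definition ffun_supp f : {set 'I_n} := [set k | (f k : nat) != 0%N].
Definition ffun_weight f : nat := (\sum_k (f k : nat))%N.
Definition fupd f x j : FT := [ffun k => if k == x then j else f k].

Lemma ffun_weight_fupd f x j : f x = ord0 -> ffun_weight (fupd f x j) = (ffun_weight f + j)%N.
Proof.
move=> fx; rewrite /ffun_weight (bigD1 x) //= [in RHS](bigD1 x) //= ffunE eqxx fx.
rewrite add0n addnC; congr (_ + _)%N; apply: eq_bigr => k kx.
by rewrite ffunE (negbTE kx).
Qed.

Lemma ffun_supp_fupd f x j : f x = ord0 ->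
  ffun_supp (fupd f x j) = if j == 0 :> nat then ffun_supp f else x |: ffun_supp f.
Proof.
move=> fx; case: ifP => j0; apply/setP => k; rewrite /ffun_supp !inE ffunE;
  by case: (eqVneq k x) => [->|kx]; rewrite ?eqxx ?fx ?j0.
Qed.

Lemma fupd_at f x j : fupd f x j x = j.
Proof. by rewrite ffunE eqxx. Qed.

Lemma fupdK f x : fupd (fupd f x ord0) x (f x) = f.
Proof. by apply/ffunP => k; rewrite !ffunE; case: eqP => // ->. Qed.

Lemma fupd_eq f x j : (fupd (fupd f x j) x ord0 == f) = (f x == ord0).
Proof.
apply/eqP/eqP => [<-|fx]; first by rewrite ffunE eqxx.
by apply/ffunP => k; rewrite !ffunE; case: eqP => // ->.
Qed.

Variable R : nzRingType.
Implicit Types (A : {set 'I_n}) (g : {set 'I_n} -> R).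

Lemma sum_ffun_supp_set0 g i :
  \sum_(f | (ffun_supp f \subset set0) && (ffun_weight f == i)) g (ffun_supp f)
  = \sum_(s : {set 'I_n} | s \subset set0) g s * geomS R #|s| i.
Proof.
pose f0 : FT := [ffun => ord0].
have supp0 f : (ffun_supp f \subset set0) = (f == f0).
  rewrite subset0; apply/eqP/eqP => [s0|->]; last by apply/setP => k; rewrite !inE ffunE.
  apply/ffunP => k; rewrite ffunE; apply/val_inj/eqP; apply: contraT => fk.
  by move/setP: s0 => /(_ k); rewrite !inE fk.
have weight0 : ffun_weight f0 = 0%N by rewrite /ffun_weight big1 // => k _; rewrite ffunE.
rewrite (eq_bigl (fun f => (f == f0) && (i == 0%N))); last first.
  by move=> f; rewrite supp0; case: eqVneq => // ->; rewrite weight0 eq_sym.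
rewrite (eq_bigl (pred1 set0)) => [|s]; last by rewrite subset0.
rewrite big_pred1_eq cards0; have [->|i0] := eqVneq i 0%N; last first.
  by rewrite big_pred0 => [|f]; rewrite /= /ps_one ?(negbTE i0) ?mulr0 ?andbF.
rewrite (eq_bigl (pred1 f0)) => [|f]; last by rewrite andbT.
by rewrite big_pred1_eq mulr1; congr g; apply/setP => k; rewrite !inE ffunE.
Qed.

Lemma sum_ffun_supp_fixed A g x i j : x \in A ->
  \sum_(f | (ffun_supp f \subset A) && (ffun_weight f == i) && (f x == j)) g (ffun_supp f)
  = \sum_(f | (ffun_supp f \subset A :\ x) && (ffun_weight f + j == i)%N)
      g (if j == 0 :> nat then ffun_supp f else x |: ffun_supp f).
Proof.
move=> xA.
rewrite (reindex_onto (fun f => fupd f x j) (fun f => fupd f x ord0)) /=; last first.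
  by move=> f /andP[_ /eqP <-]; rewrite fupdK.
have fx0 f : (ffun_supp f \subset A :\ x) -> f x = ord0.
  by rewrite subsetD1 inE negbK => /andP[_ /eqP fx]; apply/val_inj.
apply: eq_big => [f|f /andP[_]]; last by rewrite fupd_eq => /eqP fx; rewrite ffun_supp_fupd.
rewrite fupd_eq fupd_at eqxx andbT.
have [fx|fx] := eqVneq (f x) ord0; last first.
  by rewrite andbF; apply/esym/negbTE; apply: contra fx => /andP[/fx0 ->].
rewrite andbT ffun_weight_fupd // ffun_supp_fupd // subsetD1 inE fx eqxx andbT.
by case: ifP => //; rewrite subUset sub1set xA.
Qed.

Lemma sum_subsets_split A g x i : x \in A ->
  \sum_(s : {set 'I_n} | s \subset A) g s * geomS R #|s| i
  = \sum_(j < i.+1) \sum_(s : {set 'I_n} | s \subset A :\ x)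
      g (if j == 0 :> nat then s else x |: s) * geomS R #|s| (i - j)%N.
Proof.
move=> xA; rewrite big_ord_recl subn0 /=.
rewrite (bigID (fun s : {set 'I_n} => x \in s)) /= addrC; congr (_ + _).
  by apply: eq_bigl => s; rewrite subsetD1.
rewrite (reindex_onto (fun s => x |: s) (fun s => s :\ x)) /=; last first.
  by move=> s /andP[_ xs]; rewrite setD1K.
have setU1K_eq s : ((x |: s) :\ x == s) = (x \notin s).
  by apply/eqP/idP => [<-|xs]; [rewrite setD11 | rewrite setU1K].
rewrite exchange_big /=; apply: eq_big => [s|s].
  by rewrite subUset sub1set xA setU11 setU1K_eq subsetD1 /= andbT.
rewrite setU1K_eq => /andP[_ xs]; rewrite cardsU1 xs add1n geomS_succ big_ord_recl.
by rewrite mul0r add0r mulr_sumr; apply: eq_bigr => j _; rewrite mul1r.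
Qed.

Lemma sum_ffun_supp A g i : (i <= B)%N ->
  \sum_(f | (ffun_supp f \subset A) && (ffun_weight f == i)) g (ffun_supp f)
  = \sum_(s : {set 'I_n} | s \subset A) g s * geomS R #|s| i.
Proof.
move: {2}#|A| (erefl #|A|) => k; elim: k A g i => [|k IH] A g i hA hi.
  by move/eqP: hA; rewrite cards_eq0 => /eqP ->; apply: sum_ffun_supp_set0.
have [x xA] : exists x, x \in A by apply/set0Pn; rewrite -card_gt0 hA.
have hAx : #|A :\ x| = k by move: hA; rewrite (cardsD1 x) xA => -[].
pose H (j : nat) := \sum_(s : {set 'I_n} | s \subset A :\ x)
  g (if j == 0%N then s else x |: s) * geomS R #|s| (i - j)%N.
rewrite (partition_big (fun f : FT => f x) predT) //= (sum_subsets_split g i xA).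
transitivity (\sum_(j : 'I_B.+1) if (j <= i)%N then H j else 0); last first.
  by rewrite -big_mkcond /= (big_ord_widen _ H (_ : i.+1 <= B.+1)%N).
apply: eq_bigr => j _; rewrite sum_ffun_supp_fixed //; case: leqP => ji; last first.
  by rewrite big_pred0 // => f; apply/negbTE; rewrite negb_and gtn_eqF ?orbT ?ltn_addl.
rewrite (eq_bigl (fun f => (ffun_supp f \subset A :\ x) && (ffun_weight f == i - j)%N)).
  by rewrite (IH _ (fun s => g (if j == 0 :> nat then s else x |: s))) //; lia.
by move=> f; rewrite -[in RHS](eqn_add2r j) subnK.
Qed.

End BoundedFunctions.

Lemma sum_mdeg_supp (R : nzRingType) n i (g : {set 'I_n} -> R) :
  \sum_(a : 'X_{1..n < i.+1} | mdeg a == i) g (msupport a)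
  = \sum_(s : {set 'I_n}) g s * geomS R #|s| i.
Proof.
pose m_of (f : {ffun 'I_n -> 'I_i.+1}) : 'X_{1..n} := [multinom (f k : nat) | k < n].
have mdeg_of f : mdeg (m_of f) = ffun_weight f.
  by rewrite mdegE; apply: eq_bigr => k _; rewrite mnmE.
pose h f : 'X_{1..n < i.+1} := insubd bm0 (m_of f).
pose h' (a : 'X_{1..n < i.+1}) : {ffun 'I_n -> 'I_i.+1} := [ffun k => inord (a k)].
have hh' (a : 'X_{1..n < i.+1}) : m_of (h' a) = a.
  apply/mnmP => k; rewrite mnmE ffunE inordK // (leq_ltn_trans _ (valP a)) //.
  by rewrite mdegE (bigD1 k) //= leq_addr.
have hval f : (ffun_weight f < i.+1)%N -> val (h f) = m_of f.
  by move=> hf; rewrite val_insubd mdeg_of hf.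
rewrite (reindex_onto h h') => [|a /eqP ha]; last first.
  by apply/val_inj; rewrite val_insubd hh' (valP a).
rewrite (eq_bigl (fun f => (ffun_supp f \subset setT) && (ffun_weight f == i))).
  rewrite (eq_bigr (fun f => g (ffun_supp f))) => [|f /andP[_ /eqP hf]].
    by rewrite sum_ffun_supp //; apply: eq_bigl => s; rewrite subsetT.
  by congr g; apply/setP => k; rewrite !inE hval ?hf // mnmE.
move=> f; rewrite subsetT /=; have [hf|hf] := ltnP (ffun_weight f) i.+1.
  have -> : h' (h f) = f by apply/ffunP => k; rewrite ffunE hval // mnmE inord_val.
  by rewrite eqxx andbT hval // mdeg_of.
have h0 : val (h f) = 0%MM by rewrite val_insubd mdeg_of ltnNge hf.
rewrite [RHS]gtn_eqF // h0 mdeg0; apply/negbTE/andP => -[/eqP i0 /eqP hf'].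
move: hf; rewrite -hf' /ffun_weight big1 // => k _.
by rewrite ffunE h0 mnm0E -i0 inordK.
Qed.

Section KLinearTransport.
Variables (K : fieldType) (n : nat) (M : gmod K n).
Local Notation V := (gm_car M).

Definition closedK (P : {pred V}) :=
  [/\ (0 : V) \in P, (forall u v, u \in P -> v \in P -> u + v \in P) &
      (forall (c : K) u, u \in P -> c%:MP *: u \in P)].

Lemma closedK_sum (P : {pred V}) k (c : 'I_k -> K) (f : 'I_k -> V) :
  closedK P -> (forall j, f j \in P) -> \sum_(j < k) (c j)%:MP *: f j \in P.
Proof.
by case=> P0 PD PZ fP; apply: (big_ind (fun x => x \in P)) => // j _; apply: PZ.
Qed.

Variables (phi : V -> V)
  (phiD : forall u v, phi (u + v) = phi u + phi v)
  (phiZ : forall (c : K) u, phi (c%:MP *: u) = c%:MP *: phi u).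
Variables (P Q : {pred V}) (closedP : closedK P) (phiPQ : {in P, forall u, phi u \in Q})
  (phi_inj : {in P &, injective phi})
  (phi_onto : forall w, w \in Q -> exists2 u, u \in P & phi u = w).

Lemma additive_phi0 : phi 0 = 0.
Proof. by apply: (@addrI _ (phi 0)); rewrite -phiD !addr0. Qed.

Lemma phi_sum_scaleC k (c : 'I_k -> K) (f : 'I_k -> V) :
  phi (\sum_(j < k) (c j)%:MP *: f j) = \sum_(j < k) (c j)%:MP *: phi (f j).
Proof.
by rewrite (big_morph phi phiD additive_phi0); apply: eq_bigr => j _; apply: phiZ.
Qed.

Lemma is_Kbasis_map s : all (mem P) s -> is_Kbasis P s <-> is_Kbasis Q (map phi s).
Proof.
move=> sP; have P0 : (0 : V) \in P by case: closedP.
have comb_in c : \sum_(j < size s) (c j)%:MP *: s`_j \in P.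
  by apply: closedK_sum => // j; apply: (allP sP); apply: mem_nth.
have nth_phi c : \sum_(j < size s) (c j)%:MP *: (map phi s)`_j
                 = phi (\sum_(j < size s) (c j)%:MP *: s`_j).
  by rewrite phi_sum_scaleC; apply: eq_bigr => j _; rewrite (nth_map 0).
rewrite /is_Kbasis size_map; split=> -[_ sI sS]; split.
- by apply/allP => _ /mapP[u /(allP sP) uP ->]; apply: phiPQ.
- move=> c; rewrite nth_phi => h; apply: sI.
  by apply: (phi_inj (comb_in c) P0); rewrite h additive_phi0.
- move=> w /phi_onto[u /sS[c ->] <-]; exists c; exact/esym/nth_phi.
- exact: sP.
- by move=> c hc; apply: sI; rewrite nth_phi hc additive_phi0.
- move=> u uP; have [c hc] := sS _ (phiPQ uP); exists c.
  by apply: phi_inj => //; rewrite -nth_phi.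
Qed.

Lemma has_dimK_transport d : has_dimK P d <-> has_dimK Q d.
Proof.
split=> -[s [<- sB]].
  have [sP _ _] := sB; exists (map phi s); rewrite size_map.
  by split=> //; apply/(is_Kbasis_map sP).
have [sQ _ _] := sB.
have [t [tP ts]] : exists t, all (mem P) t /\ map phi t = s.
  elim: s sQ {sB} => [|w s IH] /=; first by exists [::].
  case/andP => /phi_onto[u uP <-] /IH[t [tP <-]].
  by exists (u :: t); rewrite /= uP tP.
by rewrite -ts in sB *; exists t; rewrite size_map; split=> //; apply/(is_Kbasis_map tP).
Qed.

End KLinearTransport.

Lemma msupport_addU (n : nat) (a : 'X_{1..n}) (i : 'I_n) :
  a i != 0%N -> msupport (a + U_(i))%MM = msupport a.
Proof.
move=> ai; apply/setP => x; rewrite !inE mnmDE mnm1E.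
by case: (eqVneq i x) => [<-|_]; rewrite ?addn0 ?addn1 ?ai.
Qed.

Section Squarefree.
Variables (K : fieldType) (n : nat) (M : gmod K n).
Hypotheses (gradedM : is_graded M) (sqfM : is_squarefree M).

Lemma closedK_comp a : closedK (gm_comp M a).
Proof. by case: gradedM => M0 MD MZ _ _; split=> [|u v|c u]; [apply: M0|apply: MD|apply: MZ]. Qed.

Lemma has_dimK_comp_addU (a : 'X_{1..n}) (i : 'I_n) d : a i != 0%N ->
  has_dimK (gm_comp M a) d <-> has_dimK (gm_comp M (a + U_(i))%MM) d.
Proof.
move=> ai; have [inj onto] := sqfM ai.
apply: (has_dimK_transport (phi := fun u => 'X_i *: u)) => //.
- by move=> u v; rewrite scalerDr.
- by move=> c u; rewrite !scalerA mulrC.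
- exact: closedK_comp.
- by case: gradedM => _ _ _ MX _ u; apply: MX.
Qed.

Lemma has_dimK_comp_supp (a : 'X_{1..n}) d :
  has_dimK (gm_comp M a) d <-> has_dimK (gm_comp M (indic (msupport a))) d.
Proof.
have [k] := ubnP (mdeg a); elim: k a => // k IH a ha.
have [/existsP[j aj]|/existsPn a01] := boolP [exists j, (1 < a j)%N]; last first.
  suff -> : indic (msupport a) = a by [].
  apply/mnmP => x; rewrite mnmE inE.
  by move: (a01 x); rewrite -leqNgt; case: (a x) => [|[]].
pose b := (a - U_(j))%MM.
have bj : b j != 0%N by rewrite mnmBE mnm1E eqxx -lt0n subn_gt0.
have ab : a = (b + U_(j))%MM by rewrite submK // lep1mP -lt0n (ltnW aj).
rewrite ab msupport_addU // -has_dimK_comp_addU //; apply: IH.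
by move: ha; rewrite ab mdegD mdeg1 addn1 ltnS.
Qed.

Lemma dimc_supp (a : 'X_{1..n}) : dimc M a = dimc M (indic (msupport a)).
Proof.
rewrite /dimc /dimK; congr epsilon; apply: functional_extensionality => d.
exact/propositional_extensionality/has_dimK_comp_supp.
Qed.

End Squarefree.

Section LineDimension.
Variables (K : fieldType) (n : nat) (M : gmod K n).
Local Notation V := (gm_car M).
Implicit Types (P : {pred V}) (w : V).

Lemma scaleC_eq0 (c : K) w : (c%:MP *: w == 0) = (c == 0) || (w == 0).
Proof.
have [->|c0] := eqVneq c 0; first by rewrite mpolyC0 scale0r eqxx.
apply/eqP/eqP => [h|->]; last by rewrite scaler0.
by rewrite -[w]scale1r -mpolyC1 -(mulVf c0) mpolyCM -scalerA h scaler0.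
Qed.

Lemma Kbasis_neq0 P s : is_Kbasis P s -> forall j : 'I_(size s), s`_j != 0.
Proof.
case=> _ sI _ j; apply/eqP => sj0.
have := sI (fun k => if k == j then 1 else 0); rewrite (bigD1 j) //= big1 => [|k /negbTE->].
  by rewrite eqxx mpolyC1 scale1r sj0 addr0 => /(_ erefl j) /eqP; rewrite eqxx oner_eq0.
by rewrite mpolyC0 scale0r.
Qed.

Lemma has_dimK_zeroE P d : (forall v, v \in P -> v = 0) -> has_dimK P d <-> d = 0%N.
Proof.
move=> P0; split=> [[s [<- sB]]|->]; last first.
  exists [::]; split=> //; split=> // [c _ [] //|v /P0 ->].
  by exists (fun=> 0); rewrite big_ord0.
case: s sB => //= w s sB; have := Kbasis_neq0 sB ord0; have [/andP[wP _] _ _] := sB.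
by rewrite /= (P0 w wP) eqxx.
Qed.

Lemma has_dimK_lineE P w d : w != 0 -> w \in P ->
  (forall v, v \in P -> exists c : K, v = c%:MP *: w) -> has_dimK P d <-> d = 1%N.
Proof.
move=> w0 wP Pw; split=> [[s [<- sB]]|->]; last first.
  exists [:: w]; split=> //; split=> [|c|v /Pw[c ->]]; first by rewrite /= wP.
    by rewrite big_ord1 => /eqP; rewrite scaleC_eq0 (negbTE w0) orbF => /eqP c0 j; rewrite ord1.
  by exists (fun=> c); rewrite big_ord1.
have [sP sI sS] := sB; have s_neq0 := Kbasis_neq0 sB.
case: s sP sI sS s_neq0 {sB} => [_ _ /(_ w wP)[c]|u0 [//|u1 s]] /=.
  by rewrite big_ord0 => w0'; rewrite w0' eqxx in w0.
case/and3P=> /Pw[b0 ->] /Pw[b1 ->] _ sI _ s_neq0.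
pose c (j : 'I_(size s).+2) : K := if j == 0 :> nat then b1 else if j == 1 :> nat then - b0 else 0.
have := sI c; rewrite !big_ord_recl big1 => [|j _]; last by rewrite mpolyC0 scale0r.
rewrite /c /= !scalerA -!mpolyCM mulNr mulrC mpolyCN scaleNr addr0 subrr.
move=> /(_ erefl ord0) /= b10; have := s_neq0 (lift ord0 ord0).
by rewrite /= b10 mpolyC0 scale0r eqxx.
Qed.

End LineDimension.

Definition kill_vars_tuple (K : fieldType) (n l : nat) : n.-tuple {mpoly K[l]} :=
  [tuple if insub (val i) is Some j then 'X_j else 0 | i < n].

Definition kill_vars (K : fieldType) (n l : nat) (p : {mpoly K[n]}) : {mpoly K[l]} :=
  p \mPo kill_vars_tuple K n l.

(* N_l is modelled on k[x_1..x_l], on which S acts through kill_vars (x_i |-> 0 for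
   i >= l); its component of degree a is k x^(a - 1) when supp a = [l], and 0
   otherwise. *)
Definition sqfN_car (K : fieldType) (n l : nat) := {mpoly K[l]}.
HB.instance Definition _ (K : fieldType) (n l : nat) :=
  GRing.Zmodule.on (sqfN_car K n l).

Definition sqfN_scale (K : fieldType) (n l : nat) (p : {mpoly K[n]}) (q : sqfN_car K n l) :
  sqfN_car K n l := kill_vars l p * (q : {mpoly K[l]}).

Section SqfNScale.
Variables (K : fieldType) (n l : nat).

Lemma sqfN_scaleA a b (v : sqfN_car K n l) :
  sqfN_scale a (sqfN_scale b v) = sqfN_scale (a * b) v.
Proof. by rewrite /sqfN_scale /kill_vars rmorphM mulrA. Qed.

Lemma sqfN_scale1 : left_id 1 (@sqfN_scale K n l).
Proof. by move=> v; rewrite /sqfN_scale /kill_vars rmorph1 mul1r. Qed.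

Lemma sqfN_scaleDr : right_distributive (@sqfN_scale K n l) +%R.
Proof. by move=> a u v; rewrite /sqfN_scale mulrDr. Qed.

Lemma sqfN_scaleDl (v : sqfN_car K n l) : {morph (@sqfN_scale K n l)^~ v : a b / a + b}.
Proof. by move=> a b; rewrite /sqfN_scale /kill_vars rmorphD mulrDl. Qed.

End SqfNScale.

HB.instance Definition _ (K : fieldType) (n l : nat) :=
  GRing.Zmodule_isLmodule.Build {mpoly K[n]} (sqfN_car K n l) (@sqfN_scaleA K n l)
    (@sqfN_scale1 K n l) (@sqfN_scaleDr K n l) (@sqfN_scaleDl K n l).

Definition prefix_set (n l : nat) : {set 'I_n} := [set i : 'I_n | (i < l)%N].

Section SqfN.
Variables (K : fieldType) (n l : nat) (lln : (l <= n)%N).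
Local Notation NC := (sqfN_car K n l).

Lemma sqfN_scaleE (p : {mpoly K[n]}) (q : NC) : p *: q = kill_vars l p * (q : {mpoly K[l]}).
Proof. by []. Qed.

Lemma sqfN_scaleC (c : K) (q : NC) : c%:MP *: q = c%:MP * (q : {mpoly K[l]}).
Proof. by rewrite sqfN_scaleE /kill_vars comp_mpolyC. Qed.

Definition mnm_restr (b : 'X_{1..n}) : 'X_{1..l} := [multinom b (widen_ord lln j) | j < l].
Definition mnm_ext (b : 'X_{1..l}) : 'X_{1..n} :=
  [multinom if insub (val i) is Some j then b j else 0%N | i < n].
Definition mnm_shift_down (a : 'X_{1..n}) : 'X_{1..l} :=
  [multinom (a (widen_ord lln j)).-1 | j < l].
Definition mnm_shift_up (b : 'X_{1..l}) : 'X_{1..n} :=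
  [multinom if insub (val i) is Some j then (b j).+1 else 0%N | i < n].

Lemma insub_widen (j : 'I_l) : insub (val (widen_ord lln j)) = Some j.
Proof. exact: valK. Qed.

Lemma mnm_restr_ext b : mnm_restr (mnm_ext b) = b.
Proof. by apply/mnmP => j; rewrite !mnmE insub_widen. Qed.

Lemma mnm_ext_out b (i : 'I_n) : (l <= i)%N -> mnm_ext b i = 0%N.
Proof. by move=> li; rewrite mnmE insubN // -leqNgt. Qed.

Lemma msupport_shift_up b : msupport (mnm_shift_up b) = prefix_set n l.
Proof. by apply/setP => x; rewrite !inE mnmE; case: insubP => [j -> _ | /negbTE ->]. Qed.

Lemma mnm_shift_upK : cancel mnm_shift_up mnm_shift_down.
Proof. by move=> b; apply/mnmP => j; rewrite !mnmE insub_widen. Qed.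

Lemma mnm_shift_downK a :
  msupport a = prefix_set n l -> mnm_shift_up (mnm_shift_down a) = a.
Proof.
move=> ha; apply/mnmP => x; rewrite !mnmE.
case: insubP => [j xl hj | xl]; last first.
  have : x \notin msupport a by rewrite ha inE.
  by rewrite inE negbK => /eqP ->.
have : widen_ord lln j \in msupport a by rewrite ha inE /= ltn_ord.
rewrite inE -lt0n /mnm_shift_down mnmE => /prednK ->; congr (a _); exact/val_inj.
Qed.

Lemma kill_varsX (b : 'X_{1..n}) : (forall i : 'I_n, (l <= i)%N -> b i = 0%N) ->
  kill_vars l ('X_[b] : {mpoly K[n]}) = 'X_[mnm_restr b].
Proof.
move=> bl; rewrite /kill_vars comp_mpolyX mpolyXE_id.
rewrite (bigID (fun i : 'I_n => (i < l)%N)) /= [X in _ * X]big1 ?mulr1; last first.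
  by move=> i; rewrite -leqNgt => /bl ->.
rewrite (big_ord_narrow lln); apply: eq_bigr => j _.
by rewrite tnth_mktuple mnmE insub_widen.
Qed.

Lemma kill_varsX_out (b : 'X_{1..n}) (i : 'I_n) : (l <= i)%N -> b i != 0%N ->
  kill_vars l ('X_[b] : {mpoly K[n]}) = 0.
Proof.
move=> li bi; rewrite /kill_vars comp_mpolyX (bigD1 i) //= tnth_mktuple insubN -?leqNgt //.
by rewrite expr0n (negbTE bi) mul0r.
Qed.

Lemma mnm_shift_downD a b : msupport a = prefix_set n l ->
  mnm_shift_down (a + b)%MM = (mnm_shift_down a + mnm_restr b)%MM.
Proof.
move=> ha; apply/mnmP => j; rewrite !(mnmE, mnmDE).
have : widen_ord lln j \in msupport a by rewrite ha inE /= ltn_ord.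
by rewrite inE; case: (a _).
Qed.

Lemma msupport_addD a (b : 'X_{1..n}) : msupport a = prefix_set n l ->
  (forall i : 'I_n, (l <= i)%N -> b i = 0%N) -> msupport (a + b)%MM = prefix_set n l.
Proof.
move=> ha bl; apply/setP => x; rewrite !inE mnmDE.
have [lx|xl] := leqP l x.
  have : x \notin msupport a by rewrite ha inE -leqNgt.
  by rewrite inE negbK bl // => /eqP ->.
have : x \in msupport a by rewrite ha inE.
by rewrite inE -!lt0n => ax; rewrite (leq_trans ax) ?leq_addr.
Qed.

Definition is_scaled_mono (m : 'X_{1..l}) (q : {mpoly K[l]}) := q == (q@_m)%:MP * 'X_[m].

Lemma is_scaled_monoP m q : reflect (exists c, q = c%:MP * 'X_[m]) (is_scaled_mono m q).
Proof.
apply: (iffP eqP) => [->|[c ->]]; first by eexists.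
by rewrite mcoeffCM mcoeffX eqxx mulr1.
Qed.

Lemma is_scaled_mono_CX (c : K) m : is_scaled_mono m (c%:MP * 'X_[m]).
Proof. by apply/is_scaled_monoP; exists c. Qed.

Definition sqfN_comp (a : 'X_{1..n}) : {pred NC} := [pred q : NC |
  if msupport a == prefix_set n l then is_scaled_mono (mnm_shift_down a) q else q == 0].

Definition sqfN : gmod K n := GMod sqfN_comp.

Lemma sqfN_comp0 a : (0 : NC) \in sqfN_comp a.
Proof.
by rewrite inE; case: ifP => // _; apply/is_scaled_monoP; exists 0; rewrite mpolyC0 mul0r.
Qed.

Lemma sqfN_compD a (u v : NC) : u \in sqfN_comp a -> v \in sqfN_comp a -> u + v \in sqfN_comp a.
Proof.
rewrite !inE; case: ifP => _; last by move=> /eqP -> /eqP ->; rewrite addr0.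
move=> /is_scaled_monoP[cu ->] /is_scaled_monoP[cv ->]; apply/is_scaled_monoP.
by exists (cu + cv); rewrite mpolyCD mulrDl.
Qed.

Lemma sqfN_compZ a (c : K) (u : NC) : u \in sqfN_comp a -> c%:MP *: u \in sqfN_comp a.
Proof.
rewrite !inE sqfN_scaleC; case: ifP => _; first last.
  by move=> /eqP ->; rewrite mulr0.
move=> /is_scaled_monoP[cu ->]; apply/is_scaled_monoP.
by exists (c * cu); rewrite mulrA mpolyCM.
Qed.

Lemma sqfN_compX a b (u : NC) : u \in sqfN_comp a -> 'X_[b] *: u \in sqfN_comp (a + b)%MM.
Proof.
rewrite sqfN_scaleE.
case: (boolP [exists i : 'I_n, (l <= i)%N && (b i != 0%N)]) => [|/existsPn bl].
  case/existsP=> i /andP[li bi]; rewrite (kill_varsX_out li bi) mul0r => _.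
  exact: sqfN_comp0.
have {}bl (i : 'I_n) : (l <= i)%N -> b i = 0%N.
  by move=> li; move: (bl i); rewrite li negbK => /eqP.
rewrite kill_varsX // !inE; have [ha|ha] := eqVneq (msupport a) (prefix_set n l); last first.
  by move=> /eqP ->; rewrite mulr0; apply: (sqfN_comp0 (a + b)%MM).
rewrite msupport_addD // eqxx => /is_scaled_monoP[cu ->]; apply/is_scaled_monoP.
by exists cu; rewrite mulrCA -mpolyXD mnm_shift_downD // addmC.
Qed.

Lemma sqfN_decomp (v : NC) : exists (s : seq 'X_{1..n}) (f : 'X_{1..n} -> NC),
  [/\ uniq s, (forall a, f a \in sqfN_comp a) & v = \sum_(a <- s) f a].
Proof.
pose f a : NC := if msupport a == prefix_set n l
  then ((v : {mpoly K[l]})@_(mnm_shift_down a))%:MP * 'X_[mnm_shift_down a] else 0.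
exists (map mnm_shift_up (msupp (v : {mpoly K[l]}))), f; split.
- by rewrite map_inj_uniq ?msupp_uniq //; apply: can_inj mnm_shift_upK.
- by move=> a; rewrite inE /f; case: ifP => [-> /=|-> //]; apply: is_scaled_mono_CX.
rewrite big_map {1}[v : {mpoly K[l]}]mpolyE; apply: eq_bigr => m _.
by rewrite /f msupport_shift_up eqxx mnm_shift_upK mul_mpolyC.
Qed.

Lemma sqfN_decomp_uniq (s : seq 'X_{1..n}) (f : 'X_{1..n} -> NC) :
  uniq s -> (forall a, f a \in sqfN_comp a) ->
  \sum_(a <- s) f a = 0 -> forall a, a \in s -> f a = 0.
Proof.
move=> us fP sum0 a0 a0s; have := fP a0; rewrite inE.
have [ha0|] := eqVneq (msupport a0) (prefix_set n l); last by move=> _ /eqP.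
case/is_scaled_monoP=> c0 fa0; rewrite fa0; suff -> : c0 = 0 by rewrite mpolyC0 mul0r.
have := congr1 (mcoeff (mnm_shift_down a0)) sum0.
rewrite mcoeff0 raddf_sum (bigD1_seq a0) //= fa0 mcoeffCM mcoeffX eqxx mulr1.
rewrite big_seq_cond big1 ?addr0 // => a /andP[_ aa0]; have := fP a; rewrite inE.
have [ha|_ /eqP ->] := eqVneq (msupport a) (prefix_set n l); last by rewrite mcoeff0.
case/is_scaled_monoP=> c ->; rewrite mcoeffCM mcoeffX.
have [e|] := eqVneq (mnm_shift_down a) (mnm_shift_down a0); last by rewrite mulr0.
by move: aa0; rewrite -(mnm_shift_downK ha) -(mnm_shift_downK ha0) e eqxx.
Qed.

Lemma sqfN_graded : is_graded sqfN.
Proof.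
split; [exact: sqfN_comp0 | exact: sqfN_compD | exact: sqfN_compZ | exact: sqfN_compX |].
by split; [exact: sqfN_decomp | exact: sqfN_decomp_uniq].
Qed.

Lemma sqfN_fg : is_fg sqfN.
Proof.
exists [:: (1 : NC)] => v.
exists (fun=> \sum_(m <- msupp (v : {mpoly K[l]})) (v@_m)%:MP * 'X_[mnm_ext m]).
rewrite big_ord1 /= sqfN_scaleE mulr1 /kill_vars raddf_sum [LHS](mpolyE v).
apply: eq_bigr => m _; rewrite /= rmorphM /= comp_mpolyC -/(kill_vars l _).
by rewrite kill_varsX ?mnm_restr_ext ?mul_mpolyC // => i; apply: mnm_ext_out.
Qed.

Lemma mpolyX_neq0 (m : 'X_{1..l}) : ('X_[m] : {mpoly K[l]}) != 0.
Proof.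
apply/eqP => /(congr1 (mcoeff m)) /eqP.
by rewrite mcoeffX eqxx mcoeff0 oner_eq0.
Qed.

Lemma sqfN_squarefree : is_squarefree sqfN.
Proof.
move=> a i ai /=; have supp_aU := msupport_addU ai.
have [il|li] := ltnP i l; last first.
  have ha : msupport a != prefix_set n l.
    by apply: contraNneq ai => /setP /(_ i); rewrite !inE ltnNge li => /negbFE.
  split=> [u v|w]; rewrite !inE ?supp_aU (negbTE ha); first by move=> /eqP -> /eqP ->.
  by move=> /eqP ->; exists 0; [apply: sqfN_comp0 | rewrite scaler0].
pose j : 'I_l := Ordinal il.
have rU : mnm_restr U_(i)%MM = U_(j)%MM by apply/mnmP => k; rewrite !mnmE.
have Xi : kill_vars l ('X_i : {mpoly K[n]}) = 'X_j.
  rewrite kill_varsX ?rU // => k lk; rewrite mnm1E; case: eqP => // ik.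
  by move: lk; rewrite -ik leqNgt il.
split=> [u v _ _|w]; first by rewrite !sqfN_scaleE Xi; apply: mulfI; apply: mpolyX_neq0.
rewrite !inE supp_aU; have [ha|_ /eqP ->] := eqVneq (msupport a) (prefix_set n l); last first.
  by exists 0; [apply: sqfN_comp0 | rewrite scaler0].
case/is_scaled_monoP=> c ->; exists (c%:MP * 'X_[mnm_shift_down a] : NC).
  by rewrite inE ha eqxx is_scaled_mono_CX.
by rewrite sqfN_scaleE Xi mulrCA -mpolyXD mnm_shift_downD // rU addmC.
Qed.

Lemma sqfN_fg_squarefree : fg_squarefree sqfN.
Proof. by split; [apply: sqfN_graded | apply: sqfN_fg | apply: sqfN_squarefree]. Qed.

Lemma sqfN_has_dimKE a d :
  has_dimK (gm_comp sqfN a) d <-> d = (msupport a == prefix_set n l) :> nat.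
Proof.
have [ha|ha] := eqVneq (msupport a) (prefix_set n l) => /=; last first.
  by apply: has_dimK_zeroE => v; rewrite /= inE (negbTE ha) => /eqP.
apply: (@has_dimK_lineE _ _ sqfN _ ('X_[mnm_shift_down a] : NC)).
- exact: mpolyX_neq0.
- by rewrite /= inE ha eqxx -[X in is_scaled_mono _ X]mul1r -mpolyC1 is_scaled_mono_CX.
- by move=> v; rewrite /= inE ha eqxx => /is_scaled_monoP[c ->]; exists c; rewrite sqfN_scaleC.
Qed.

End SqfN.

Lemma hilbS_sqf (K : fieldType) n (R : nzRingType) (M : gmod K n) : fg_squarefree M ->
  forall i, hilbS R M i = \sum_(s : {set 'I_n}) (dimc M (indic s))%:R * geomS R #|s| i.
Proof.
case=> gradedM _ sqfM i; rewrite /hilbS /hilb natr_sum -sum_mdeg_supp.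
by apply: eq_bigr => a _; rewrite (dimc_supp gradedM sqfM).
Qed.

Lemma msupport_indic n (s : {set 'I_n}) : msupport (indic s) = s.
Proof. by apply/setP => x; rewrite inE mnmE; case: (x \in s). Qed.

Lemma card_prefix_set n l : (l <= n)%N -> #|prefix_set n l| = l.
Proof.
move=> ln; rewrite -sum1_card (eq_bigl (fun i : 'I_n => (i < l)%N)) => [|i]; last by rewrite inE.
by rewrite (big_ord_narrow ln) sum1_card card_ord.
Qed.

Lemma dimc_sqfN (K : fieldType) n l (ln : (l <= n)%N) a :
  dimc (sqfN K ln) a = (msupport a == prefix_set n l).
Proof.
rewrite /dimc /dimK; apply/(sqfN_has_dimKE K ln a); apply: epsilon_spec.
by exists (msupport a == prefix_set n l : nat); apply/sqfN_has_dimKE.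
Qed.

Lemma hilbS_sqfN (K : fieldType) n l (ln : (l <= n)%N) (R : nzRingType) i :
  hilbS R (sqfN K ln) i = geomS R l i.
Proof.
rewrite (hilbS_sqf _ (sqfN_fg_squarefree K ln)) (bigD1 (prefix_set n l)) //= big1 ?addr0.
  by rewrite dimc_sqfN msupport_indic eqxx mul1r card_prefix_set.
by move=> s /negbTE sl; rewrite dimc_sqfN msupport_indic sl mul0r.
Qed.

Lemma sum_set_by_card n (R : nzRingType) (F : {set 'I_n} -> R) (G : nat -> R) :
  \sum_(s : {set 'I_n}) F s * G #|s|
  = \sum_(l < n.+1) (\sum_(s : {set 'I_n} | #|s| == l) F s) * G l.
Proof.
rewrite (partition_big (fun s : {set 'I_n} => inord #|s| : 'I_n.+1) xpredT) //=.
have cardn (s : {set 'I_n}) : (#|s| < n.+1)%N.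
  by rewrite ltnS -[X in (_ <= X)%N]card_ord max_card.
apply: eq_bigr => l _; rewrite mulr_suml.
by apply: eq_big => [s|s /eqP <-]; rewrite ?inordK // -(inj_eq val_inj) /= inordK.
Qed.

Lemma sqf_cone_geomS (K : fieldType) n (R : realFieldType) (f : series R) :
  in_sqf_cone K n f -> exists c : 'I_n.+1 -> R,
    (forall l, 0 <= c l) /\ (forall i, f i = \sum_(l < n.+1) c l * geomS R l i).
Proof.
case=> k [c [Ms [c0 sqfMs hf]]].
pose m j (l : 'I_n.+1) : R := \sum_(s : {set 'I_n} | #|s| == l) (dimc (Ms j) (indic s))%:R.
exists (fun l => \sum_(j < k) c j * m j l); split=> [l|i].
  by apply: sumr_ge0 => j _; rewrite mulr_ge0 ?sumr_ge0.
rewrite hf; under eq_bigr do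
  rewrite (hilbS_sqf _ (sqfMs _)) (sum_set_by_card _ (geomS R ^~ i)) mulr_sumr.
rewrite exchange_big; apply: eq_bigr => l _; rewrite mulr_suml.
by apply: eq_bigr => j _; rewrite mulrA.
Qed.

Lemma geomS_in_sqf_cone (K : fieldType) n (R : realFieldType) (f : series R)
    (c : 'I_n.+1 -> R) :
  (forall l, 0 <= c l) -> (forall i, f i = \sum_(l < n.+1) c l * geomS R l i) ->
  in_sqf_cone K n f.
Proof.
move=> c0 hf; exists n.+1, c, (fun l : 'I_n.+1 => sqfN K (ltn_ord l : (l <= n)%N)).
split=> // [l|i]; first exact: sqfN_fg_squarefree.
by rewrite hf; apply: eq_bigr => l _; rewrite hilbS_sqfN.
Qed.

Theorem theorem4p5 (K : fieldType) (n : nat) (R : realFieldType) :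
  (forall M : gmod K n, fg_squarefree M ->
     forall i : nat,
       hilbS R M i = \sum_(sigma : {set 'I_n}) (dimc M (indic sigma))%:R * geomS R #|sigma| i)
  /\
  (forall l : nat, (l <= n)%N ->
     exists N : gmod K n,
       [/\ fg_squarefree N,
           (forall a : 'X_{1..n},
              has_dimK (gm_comp N a) (msupport a == [set i : 'I_n | (i < l)%N] : nat)) &
           (forall i, hilbS R N i = geomS R l i)])
  /\
  (forall f : series R,
     in_sqf_cone K n f <->
     exists c : 'I_n.+1 -> R,
       (forall l, 0 <= c l) /\ (forall i, f i = \sum_(l < n.+1) c l * geomS R l i))
  /\
  (forall c : 'I_n.+1 -> R,
     (forall i, \sum_(l < n.+1) c l * geomS R l i = 0) -> forall l, c l = 0).
Proof.
split; first exact: hilbS_sqf.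
split.
  move=> l ln; exists (sqfN K ln); split=> [||i]; last exact: hilbS_sqfN.
    exact: sqfN_fg_squarefree.
  by move=> a; apply/sqfN_has_dimKE.
split; last exact: geomS_lin_indep.
move=> f; split; first exact: sqf_cone_geomS.
by case=> c [c0 hf]; apply: geomS_in_sqf_cone c0 hf.
Qed.
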